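(* Let $M\ge2$, $n_1,\dots,n_M\ge2$, $\mathcal S=\prod_{j=1}^M\{1,\dots,n_j\}$, and $Q=\prod_{i=1}^M n_i-\sum_{i=1}^M n_i+M-1$. Define, for $I\subseteq\{1,\dots,M\}$, $$c_{\{1,\dots,M\}}=1,\qquad c_I=\frac{M-1-\sum_{i\in I}n_i}{Q}\quad (I\ne\{1,\dots,M\}),$$ and let $C$ be the $\mathcal S\times\mathcal S$ matrix with $C_{z,z'}=c_{A(z,z')}$, where $A(z,z')$ is the set of indices at which $z$ and $z'$ have equal coordinates. Let $\lambda_J$, $J\subseteq\{1,\dots,M\}$, be given by $$\lambda_J=\sum_{I\subseteq\{1,\dots,M\}}(-1)^{\#(J^C\cap I^C)}\,c_I\prod_{j\in J\cap I^C}(n_j-1).$$ Then $\lambda_J=\dfrac{\prod_{i=1}^M n_i}{Q}$ for every $J$ with $\#J<M-1$, and $\lambda_J=0$ for every $J$ with $\#J\ge M-1$. Consequently the maximum eigenvalue of $C$ is $$\lambda_{\max}=\frac{\prod_{i=1}^M n_i}{\prod_{i=1}^M n_i-\sum_{i=1}^M n_i+M-1}.$$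
   Context: $I^C=\{1,\dots,M\}\setminus I$; $\#$ denotes cardinality; empty products equal $1$. The eigenvalues of a matrix of this form (entries depending only on the agreement set of the two strata) are exactly the $\lambda_J$ with multiplicities $\prod_{j\notin J}(n_j-1)$. (In the paper, $C$ is the conjectured asymptotic correlation matrix of normalized within-stratum imbalances under Pocock–Simon minimization with equally prevalent strata.) *)

From HB Require Import structures.
From mathcomp Require Import all_boot all_order all_algebra.
Set Implicit Arguments. Unset Strict Implicit. Unset Printing Implicit Defensive.
Import Order.TTheory GRing.Theory Num.Theory.
Local Open Scope ring_scope.

Section Defs.
Variables (R : realFieldType) (M : nat) (n : 'I_M -> nat).

Definition strata := {dffun forall j : 'I_M, 'I_(n j)}.

Definition agree (z z' : strata) : {set 'I_M} := [set j | z j == z' j].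

Definition Qc : R := \prod_(i < M) (n i)%:R - \sum_(i < M) (n i)%:R + M%:R - 1.

Definition cI (I : {set 'I_M}) : R :=
  if I == [set: 'I_M] then 1
  else (M%:R - 1 - \sum_(i in I) (n i)%:R) / Qc.

Definition Cmat : 'M[R]_#|{: strata}| :=
  \matrix_(a, b) cI (agree (enum_val a) (enum_val b)).

Definition lambdaJ (J : {set 'I_M}) : R :=
  \sum_(I : {set 'I_M})
     (-1) ^+ #|~: J :&: ~: I| * cI I * \prod_(j in J :&: ~: I) ((n j)%:R - 1).
End Defs.

From HB Require Import structures.
From mathcomp Require Import all_boot all_order all_algebra perm.
From mathcomp Require Import ring lra.
Set Implicit Arguments. Unset Strict Implicit. Unset Printing Implicit Defensive.
Import Order.TTheory GRing.Theory Num.Theory.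
Local Open Scope ring_scope.

(* With N = prod_i n_i, the coefficients satisfy
     Q c_I = N [I = all] + (M - 1) - sum_(i in I) n_i,
   i.e. Q C = N Id + (M - 1) 11^T - sum_i n_i E_i, where E_i is the 0/1 matrix
   of agreement in coordinate i.  Summing the weights of lambda_J over I with
   sum_A prod_j (j \in A ? F j : G j) = prod_j (F j + G j) gives
     Q lambda_J = N + (M - 1) N [J = all] - N #{i | all \ {i} <= J},
   which is N when #J < M - 1 and 0 otherwise.
   By Cauchy-Schwarz over the n_i fibres of coordinate i,
   (sum_x u x)^2 <= n_i u^T E_i u, so u^T (Q C) u <= N |u|^2 - (sum_x u x)^2
   and, as Q > 0, no eigenvalue exceeds N / Q.  The product of two dipoles
   u x = d (x i0) * d (x i1), d = e_a - e_b, is killed by 11^T and by every E_i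
   (swapping a and b in coordinate i0, or in i1 when i = i0, negates u and
   preserves the fibres of E_i), so it is an eigenvector for N / Q. *)

Lemma prodr_1D_ge (R : realDomainType) (I : Type) (r : seq I) (x : I -> R) :
  (forall i, 0 <= x i) -> 1 + \sum_(i <- r) x i <= \prod_(i <- r) (1 + x i).
Proof.
move=> x_ge0; elim: r => [|a r IHr]; first by rewrite !big_nil addr0.
rewrite !big_cons; have s_ge0 : 0 <= \sum_(i <- r) x i by rewrite sumr_ge0.
have := ler_wpM2l (addr_ge0 ler01 (x_ge0 a)) IHr; have := x_ge0 a; nra.
Qed.

Lemma prodr_1D_gt (R : realDomainType) (I : Type) (r : seq I) (x : I -> R) :
  (1 < size r)%N -> (forall i, 0 < x i) ->
  1 + \sum_(i <- r) x i < \prod_(i <- r) (1 + x i).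
Proof.
case: r => [|a [|b r]] // _ x_gt0.
rewrite [\sum_(_ <- _) _]big_cons [\prod_(_ <- _) _]big_cons.
have x_ge0 i : 0 <= x i by exact: ltW.
have s_gt0 : 0 < \sum_(i <- b :: r) x i by rewrite big_cons ltr_wpDr ?sumr_ge0.
have := ler_wpM2l (addr_ge0 ler01 (x_ge0 a)) (prodr_1D_ge (b :: r) x_ge0).
have := x_gt0 a; nra.
Qed.

Lemma sqr_sum_le_card (R : realDomainType) (J : finType) (S : J -> R) :
  (\sum_j S j) ^+ 2 <= #|J|%:R * \sum_j S j ^+ 2.
Proof.
set T := \sum_j S j; set V := \sum_j S j ^+ 2.
have sqrT : T ^+ 2 = \sum_j \sum_k S j * S k.
  by rewrite expr2 mulr_suml; under eq_bigr do rewrite mulr_sumr.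
have sum_sqr : \sum_j \sum_k (S j ^+ 2 + S k ^+ 2) = V *+ #|J| *+ 2.
  under eq_bigr do rewrite big_split /=.
  by rewrite big_split /= [X in X + _]exchange_big /= !sumr_const mulr2n.
have : 0 <= \sum_j \sum_k (S j - S k) ^+ 2 by do 2!apply: sumr_ge0 => ? _; exact: sqr_ge0.
have -> : \sum_j \sum_k (S j - S k) ^+ 2 = (V *+ #|J| - T ^+ 2) *+ 2.
  rewrite mulrnBl -sum_sqr sqrT -sumrMnl -sumrB; apply: eq_bigr => j _.
  by rewrite -sumrMnl -sumrB; apply: eq_bigr => k _; ring.
by rewrite mulr_natl pmulrn_lge0 // subr_ge0.
Qed.

Lemma sum_mul_fibre (R : comRingType) (T J : finType) (k : T -> J) (u : T -> R) :
  \sum_y u y * \sum_(x | k x == k y) u x = \sum_j (\sum_(x | k x == j) u x) ^+ 2.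
Proof.
rewrite (partition_big k xpredT) //=; apply: eq_bigr => j _.
rewrite expr2 mulr_suml; apply: eq_bigr => y /eqP <-.
by rewrite mulrC.
Qed.

Lemma sqr_sum_le_fibres (R : realDomainType) (T J : finType) (k : T -> J) (u : T -> R) :
  (\sum_x u x) ^+ 2 <= #|J|%:R * \sum_y u y * \sum_(x | k x == k y) u x.
Proof. by rewrite sum_mul_fibre (partition_big k xpredT) //=; exact: sqr_sum_le_card. Qed.

Lemma sumr_eq0_involution (R : numDomainType) (T : finType) (P : pred T)
    (h : T -> T) (F : T -> R) :
  involutive h -> (forall x, P (h x) = P x) -> (forall x, F (h x) = - F x) ->
  \sum_(x | P x) F x = 0.
Proof.
move=> hK Ph Fh; have h_inj := inv_inj hK.
have : \sum_(x | P x) F x = - \sum_(x | P x) F x.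
  rewrite {1}(reindex_inj h_inj) /= -sumrN.
  by apply: congr_big => // [x | x _]; rewrite ?Ph ?Fh.
by move/eqP; rewrite -subr_eq0 opprK -mulr2n mulrn_eq0 /= => /eqP.
Qed.

Lemma signed_prod_setCI (R : comRingType) (I : finType) (A B : {set I}) (f : I -> R) :
  (-1) ^+ #|~: A :&: ~: B| * \prod_(j in A :&: ~: B) f j =
  \prod_j (if j \in B then 1 else if j \in A then f j else -1).
Proof.
rewrite -prodr_const !(big_mkcond (fun j => j \in _)) -big_split.
apply: eq_bigr => j _ /=; rewrite !inE.
by case: (j \in B); case: (j \in A); rewrite /= ?mulr1 ?mul1r.
Qed.

Lemma sum_subsets_prod (R : comRingType) (I : finType) (F G : I -> R) :
  \sum_(A : {set I}) \prod_j (if j \in A then F j else G j) = \prod_j (F j + G j).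
Proof. by rewrite bigA_distr. Qed.

Lemma sum_subsets_mem (R : comRingType) (I : finType) (F G : I -> R) (i : I) :
  \sum_(A : {set I} | i \in A) \prod_j (if j \in A then F j else G j) =
  F i * \prod_(j | j != i) (F j + G j).
Proof.
pose G' j := if j == i then 0 else G j.
transitivity (\sum_(A : {set I}) \prod_j (if j \in A then F j else G' j)).
  rewrite big_mkcond; apply: eq_bigr => A _ /=.
  case: ifP => iA.
    by apply: eq_bigr => j _; rewrite /G'; case: eqP => // ->; rewrite iA.
  by rewrite (bigD1 i) //= iA /G' eqxx mul0r.
rewrite sum_subsets_prod (bigD1 i) //= /G' eqxx addr0; congr (_ * _).
by apply: eq_bigr => j /negPf ->.
Qed.

Lemma prodr_mulrb (R : comRingType) (I : finType) (A B : {pred I}) (f : I -> R) :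
  \prod_(j in A) (f j *+ (j \in B)) = (\prod_(j in A) f j) *+ (A \subset B).
Proof.
case: (boolP (A \subset B)) => [/subsetP AB | /subsetPn[j jA jB]].
  by apply: eq_bigr => j /AB ->.
by rewrite mulr0n (bigD1 j) //= (negPf jB) mulr0n mul0r.
Qed.

Lemma dipole_tperm (R : ringType) (T : finType) (a b t : T) :
  (tperm a b t == a)%:R - (tperm a b t == b)%:R = - ((t == a)%:R - (t == b)%:R) :> R.
Proof.
case: tpermP => [-> | -> | /eqP/negPf-> /eqP/negPf->]; rewrite ?eqxx ?subrr ?oppr0 //.
  by rewrite eq_sym opprB.
by rewrite eq_sym opprB.
Qed.

Lemma eigenvalue_kernelP (R : fieldType) (T : finType) (K : T -> T -> R) (a : R) :
  reflect (exists2 u : T -> R, exists x, u x != 0 & forall y, \sum_x u x * K x y = a * u y)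
          (eigenvalue (\matrix_(i, j) K (enum_val i) (enum_val j) : 'M_#|{: T}|) a).
Proof.
apply: (iffP eigenvalueP) => [[v vK v_neq0]|[u [x ux] uK]].
  exists (fun x => v 0 (enum_rank x)).
    have [j vj] : exists j, v 0 j != 0.
      apply/existsP; apply: contraNT v_neq0; rewrite negb_exists => /forallP v0.
      by apply/eqP/rowP => j; rewrite mxE; apply/eqP/negPn/v0.
    by exists (enum_val j); rewrite enum_valK.
  move=> y; move/rowP: vK => /(_ (enum_rank y)); rewrite !mxE => <-.
  rewrite (big_enum_val (A := {: T})) /=.
  by apply: eq_bigr => i _; rewrite enum_valK mxE enum_rankK.
exists (\row_i u (enum_val i)).
  apply/rowP => j; rewrite !mxE -uK (big_enum_val (A := {: T})) /=.
  by apply: eq_bigr => i _; rewrite !mxE.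
apply/eqP => /rowP /(_ (enum_rank x)); rewrite !mxE enum_rankK => /eqP.
by rewrite (negPf ux).
Qed.

Section CorrelationMatrix.

Variables (R : realFieldType) (M : nat) (n : 'I_M -> nat).
Hypotheses (M_ge2 : (2 <= M)%N) (n_ge2 : forall i, (2 <= n i)%N).

Local Notation N := (\prod_(i < M) (n i)%:R : R).
Local Notation Q := (Qc R n).

Lemma Qc_gt0 : 0 < Q.
Proof.
have -> : Q = \prod_i (1 + ((n i)%:R - 1)) - (1 + \sum_(i < M) ((n i)%:R - 1)).
  rewrite /Qc sumrB sumr_const card_ord; under eq_bigr do rewrite addrC subrK.
  ring.
rewrite subr_gt0 prodr_1D_gt //.
  by rewrite /index_enum unlock -enumT size_enum_ord.
by move=> i; rewrite subr_gt0 ltr1n n_ge2.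
Qed.

Lemma cI_mulQ (I : {set 'I_M}) :
  cI R n I * Q = N *+ (I == setT) + (M%:R - 1) - \sum_(i in I) (n i)%:R.
Proof.
rewrite /cI; case: eqP => [-> | _]; last by rewrite divfK ?gt_eqF ?Qc_gt0 // add0r.
rewrite mul1r mulr1n /Qc.
have -> : \sum_(i in [set: 'I_M]) (n i)%:R = \sum_i (n i)%:R :> R.
  by apply: eq_bigl => i; rewrite in_setT.
ring.
Qed.

Lemma lambdaJ_mulQ (J : {set 'I_M}) :
  lambdaJ R n J * Q =
  N + (M%:R - 1) * N *+ (J == setT) - \sum_i N *+ ([set~ i] \subset J).
Proof.
pose g j : R := if j \in J then (n j)%:R - 1 else -1.
pose w (I : {set 'I_M}) := \prod_j (if j \in I then 1 else g j).
have g1 j : 1 + g j = (n j)%:R *+ (j \in J).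
  by rewrite /g; case: (j \in J); rewrite ?subrr // addrC subrK.
have sum_w : \sum_I w I = N *+ (J == setT).
  rewrite sum_subsets_prod; under eq_bigr do rewrite g1.
  rewrite (prodr_mulrb predT) -subTset; congr (_ *+ nat_of_bool _).
  by apply/subsetP/subsetP => sub j _; apply: sub; rewrite inE.
have sum_w_mem i :
    (n i)%:R * \sum_(I : {set 'I_M} | i \in I) w I = N *+ ([set~ i] \subset J).
  rewrite /w sum_subsets_mem mul1r [in RHS](bigD1 i) //= -mulrnAr; congr (_ * _).
  have setC1E (F : 'I_M -> R) : \prod_(j | j != i) F j = \prod_(j in [set~ i]) F j.
    by apply: eq_bigl => j; rewrite !inE.
  by under eq_bigr do rewrite g1; rewrite !setC1E prodr_mulrb.
have w_setT : w setT = 1 by apply: big1 => j _; rewrite in_setT.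
have term I : w I * (cI R n I * Q) =
    (w I * N) *+ (I == setT) + (M%:R - 1) * w I - \sum_(i in I) (n i)%:R * w I.
  by rewrite cI_mulQ -mulr_suml; ring.
transitivity (\sum_I w I * (cI R n I * Q)).
  rewrite /lambdaJ mulr_suml; apply: eq_bigr => I _.
  by rewrite (mulrAC ((-1) ^+ _)) signed_prod_setCI -mulrA.
rewrite (eq_bigr _ (fun I _ => term I)) sumrB big_split /= -mulr_sumr sum_w.
rewrite (bigD1 setT) //= [X in _ + X + _ + _]big1 => [|I /negPf-> //].
rewrite eqxx w_setT mul1r addr0 (exchange_big_dep xpredT) //= mulrnAr.
congr (_ - _).
by apply: eq_bigr => i _; rewrite -mulr_sumr sum_w_mem.
Qed.

Lemma lambdaJE (J : {set 'I_M}) :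
  lambdaJ R n J = if (#|J| < M - 1)%N then N / Q else 0.
Proof.
have Q_neq0 := lt0r_neq0 Qc_gt0.
apply: (mulIf Q_neq0); rewrite lambdaJ_mulQ.
case: ltnP => cardJ.
  have JnT : (J == setT) = false.
    by apply: contraTF cardJ => /eqP->; rewrite cardsT card_ord -leqNgt leq_subr.
  have JnC1 i : ([set~ i] \subset J) = false.
    apply: contraTF cardJ => /subset_leq_card; rewrite cardsC1 card_ord.
    by rewrite -leqNgt subn1.
  by rewrite divfK // JnT mulr0n addr0 [\sum_i _]big1 ?subr0 // => i _; rewrite JnC1.
rewrite mul0r; have [JT | JnT] := eqVneq J setT.
  have -> : \sum_i N *+ ([set~ i] \subset J) = \sum_(i < M) N.
    by apply: eq_bigr => i _; rewrite JT subsetT.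
  by rewrite mulr1n sumr_const card_ord -mulr_natl; ring.
have [i0 _ i0J] : exists2 i0, i0 \in setT & i0 \notin J by apply/subsetPn; rewrite subTset.
have JE : J = [set~ i0].
  apply/eqP; rewrite eqEcard cardsC1 card_ord -subn1 cardJ andbT.
  by apply/subsetP => j jJ; rewrite !inE; apply: contraNneq i0J => <-.
rewrite mulr0n addr0 JE.
under [\sum_i _]eq_bigr do rewrite setCS sub1set in_set1 eq_sym mulrb.
by rewrite -big_mkcond big_pred1_eq subrr.
Qed.

Lemma agree_eqT (x y : strata n) : (agree x y == setT) = (x == y).
Proof.
apply/eqP/eqP => [xy | ->]; last by apply/setP => j; rewrite !inE eqxx.
apply/ffunP => j; have : j \in agree x y by rewrite xy inE.
by rewrite inE => /eqP.
Qed.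

Lemma sum_mul_cI_mulQ (u : strata n -> R) (y : strata n) :
  (\sum_x u x * cI R n (agree x y)) * Q =
  N * u y + (M%:R - 1) * \sum_x u x
  - \sum_i (n i)%:R * \sum_(x : strata n | x i == y i) u x.
Proof.
have term (x : strata n) : u x * cI R n (agree x y) * Q =
    (N * u x) *+ (x == y) + (M%:R - 1) * u x - \sum_(i | x i == y i) (n i)%:R * u x.
  rewrite -mulrA cI_mulQ agree_eqT -mulr_suml.
  have -> : \sum_(i in agree x y) (n i)%:R = \sum_(i | x i == y i) (n i)%:R :> R.
    by apply: eq_bigl => i; rewrite inE.
  by ring.
rewrite mulr_suml (eq_bigr _ (fun x _ => term x)) sumrB big_split /= -mulr_sumr.
rewrite (bigD1 y) //= [X in _ + X + _ + _]big1 => [|x /negPf-> //].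
rewrite eqxx mulr1n addr0 (exchange_big_dep xpredT) //=.
by congr (_ - _); apply: eq_bigr => i _; rewrite mulr_sumr.
Qed.

Lemma eigenvalue_Cmat_le (u : strata n -> R) (a : R) :
  (exists z, u z != 0) -> (forall y, \sum_x u x * cI R n (agree x y) = a * u y) ->
  a <= N / Q.
Proof.
move=> [z uz] uK; set V := \sum_y u y ^+ 2.
have V_gt0 : 0 < V.
  rewrite lt_def sumr_ge0 ?andbT => [|y _]; last exact: sqr_ge0.
  apply: contraNneq uz => /(psumr_eq0P (fun y _ => sqr_ge0 (u y))) V0.
  by rewrite -sqrf_eq0 V0.
have quad : a * V * Q = N * V + (M%:R - 1) * (\sum_x u x) ^+ 2
    - \sum_i (n i)%:R * \sum_y u y * \sum_(x : strata n | x i == y i) u x.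
  have expand y : u y * (a * u y) * Q = N * u y ^+ 2 + (M%:R - 1) * (u y * \sum_x u x)
      - \sum_i (n i)%:R * (u y * \sum_(x : strata n | x i == y i) u x).
    rewrite -uK -mulrA sum_mul_cI_mulQ.
    have -> : \sum_i (n i)%:R * (u y * \sum_(x : strata n | x i == y i) u x) =
              u y * \sum_i (n i)%:R * \sum_(x : strata n | x i == y i) u x.
      by rewrite mulr_sumr; apply: eq_bigr => i _; ring.
    by ring.
  transitivity (\sum_y u y * (a * u y) * Q).
    by rewrite /V mulr_sumr mulr_suml; apply: eq_bigr => y _; ring.
  rewrite (eq_bigr _ (fun y _ => expand y)) sumrB big_split /= -!mulr_sumr -mulr_suml.
  rewrite expr2 exchange_big /=; congr (_ - _); apply: eq_bigr => i _.
  by rewrite mulr_sumr.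
have fibres i :
    (\sum_x u x) ^+ 2 <= (n i)%:R * \sum_y u y * \sum_(x : strata n | x i == y i) u x.
  by rewrite -[X in X%:R]card_ord; exact: sqr_sum_le_fibres.
have sum_fibres : M%:R * (\sum_x u x) ^+ 2 <=
    \sum_i (n i)%:R * \sum_y u y * \sum_(x : strata n | x i == y i) u x.
  by rewrite mulr_natl -[M in _ *+ M]card_ord -sumr_const; exact: ler_sum.
have s2_ge0 := sqr_ge0 (\sum_x u x).
rewrite ler_pdivlMr ?Qc_gt0 // -(ler_pM2r V_gt0) mulrAC quad; nra.
Qed.

Section Contrast.

Variables (a b : forall j, 'I_(n j)) (i0 i1 : 'I_M).
Hypotheses (a_neq_b : forall j, a j != b j) (i0_neq_i1 : i0 != i1).

Definition swap_coord (j : 'I_M) (x : strata n) : strata n :=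
  [ffun k => if k == j then tperm (a k) (b k) (x k) else x k].

Definition dipole j (t : 'I_(n j)) : R := (t == a j)%:R - (t == b j)%:R.

Definition contrast (x : strata n) : R := dipole (x i0) * dipole (x i1).

Lemma swap_coordK j : involutive (swap_coord j).
Proof. by move=> x; apply/ffunP => k; rewrite !ffunE; case: eqP => // _; exact: tpermK. Qed.

Lemma swap_coord_id j k x : k != j -> swap_coord j x k = x k.
Proof. by rewrite ffunE => /negPf->. Qed.

Lemma dipole_swap j x : dipole (swap_coord j x j) = - dipole (x j).
Proof. by rewrite /dipole ffunE eqxx dipole_tperm. Qed.

Lemma contrast_swap0 x : contrast (swap_coord i0 x) = - contrast x.
Proof. by rewrite /contrast dipole_swap swap_coord_id 1?eq_sym // mulNr. Qed.

Lemma contrast_swap1 x : contrast (swap_coord i1 x) = - contrast x.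
Proof. by rewrite /contrast dipole_swap swap_coord_id // mulrN. Qed.

Lemma sum_contrast : \sum_x contrast x = 0.
Proof. exact: sumr_eq0_involution (swap_coordK i0) _ contrast_swap0. Qed.

Lemma fibre_sum_contrast i (y : strata n) :
  \sum_(x : strata n | x i == y i) contrast x = 0.
Proof.
have [-> | i_neq_i0] := eqVneq i i0.
  apply: sumr_eq0_involution (swap_coordK i1) _ contrast_swap1 => x.
  by rewrite swap_coord_id.
apply: sumr_eq0_involution (swap_coordK i0) _ contrast_swap0 => x.
by rewrite swap_coord_id.
Qed.

Lemma contrast_eigen y :
  \sum_x contrast x * cI R n (agree x y) = N / Q * contrast y.
Proof.
apply: (mulIf (lt0r_neq0 Qc_gt0)); rewrite sum_mul_cI_mulQ sum_contrast mulr0 addr0.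
rewrite [\sum_i _]big1 => [|i _]; last by rewrite fibre_sum_contrast mulr0.
by rewrite subr0 mulrAC divfK ?lt0r_neq0 ?Qc_gt0.
Qed.

Lemma contrast_neq0 : contrast [ffun j => a j] != 0.
Proof.
by rewrite /contrast /dipole !ffunE !eqxx !(negPf (a_neq_b _)) subr0 mulr1 oner_eq0.
Qed.

End Contrast.

Lemma eigenvalue_Cmat_max : eigenvalue (Cmat R n) (N / Q).
Proof.
have n_gt0 j : (0 < n j)%N := ltnW (n_ge2 j).
pose a j := Ordinal (n_gt0 j); pose b j := Ordinal (n_ge2 j).
apply/(eigenvalue_kernelP (fun x y => cI R n (agree x y))).
exists (contrast a b (Ordinal (ltnW M_ge2)) (Ordinal M_ge2)).
  by exists [ffun j => a j]; exact: contrast_neq0.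
exact: contrast_eigen.
Qed.

End CorrelationMatrix.

Unset Implicit Arguments.

Theorem lemma1 (R : realFieldType) (M : nat) (n : 'I_M -> nat) :
  (2 <= M)%N -> (forall i, (2 <= n i)%N) ->
  let lmax : R := (\prod_(i < M) (n i)%:R) / Qc R n in
  (forall J : {set 'I_M}, (#|J| < M - 1)%N -> lambdaJ R n J = lmax) /\
  (forall J : {set 'I_M}, (M - 1 <= #|J|)%N -> lambdaJ R n J = 0) /\
  (eigenvalue (Cmat R n) lmax /\
   forall a : R, eigenvalue (Cmat R n) a -> a <= lmax).
Proof.
move=> M_ge2 n_ge2 lmax; split; [|split; [|split]].
- by move=> J cardJ; rewrite lambdaJE // cardJ.
- by move=> J cardJ; rewrite lambdaJE // ltnNge cardJ.
- exact: eigenvalue_Cmat_max.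
- move=> a /(eigenvalue_kernelP (fun x y => cI R n (agree x y))) [u].
  exact: eigenvalue_Cmat_le.
Qed.
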